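(* There exists $\theta\in(0,1/\sqrt3)$ such that for every $\eta>0$, every $\rho>0$ and every $\theta$-bad plane $L$ for $Q_\rho$ (with unit normal $\nu=(\nu_1,\nu_2,\nu_3)$) the following holds: there is exactly one index $k\in\{1,2,3\}$ with $|\nu_k|\ge\theta$, and $$\text{either}\quad -\tfrac{3\rho}{4}<x\cdot e_k<-\tfrac{\rho}{4}\ \ \forall x\in L\cap Q_{3\rho},\qquad\text{or}\quad \tfrac{\rho}{4}<x\cdot e_k<\tfrac{3\rho}{4}\ \ \forall x\in L\cap Q_{3\rho}.$$
   Context: Here $Q_\rho=\rho[-\frac12,\frac12)^3\subset\mathbb R^3$ is centered at the origin and $Q_{3\rho}=3\rho[-\frac12,\frac12)^3$. For $A\subset\mathbb R^3$ and $s>0$, $(A)_s:=\{x:\mathrm{dist}(x,A)<s\}$. Given $\theta\in(0,1/\sqrt3)$ and $\eta>0$, a plane $L\subset\mathbb R^3$ with unit normal $\nu=(\nu_1,\nu_2,\nu_3)$ and $(L)_{3\eta\rho}\cap Q_\rho\ne\emptyset$ is called $\theta$-good for $Q_\rho$ if either (1) there are $i\ne j$ in $\{1,2,3\}$ with $|\nu_i|,|\nu_j|\ge\theta$, or (2) there is $k$ with $|\nu_k|\ge\theta$ and $\mathrm{dist}\big(L\cap Q_{3\rho},\{x_k=-\rho/2\}\cup\{x_k=\rho/2\}\big)\ge20\theta\rho$. Such a plane which is not $\theta$-good is called $\theta$-bad for $Q_\rho$. $e_k$ is the $k$-th standard basis vector. *)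

From HB Require Import structures.
From mathcomp Require Import all_boot all_order all_algebra.
From mathcomp Require Import reals.
Set Implicit Arguments. Unset Strict Implicit. Unset Printing Implicit Defensive.
Import Order.TTheory GRing.Theory Num.Theory.
Local Open Scope ring_scope.

Section Defs.
Variable R : realType.
Definition pt := 'rV[R]_3.

Definition dot (x y : pt) : R := \sum_(i < 3) x 0 i * y 0 i.
Definition enorm (x : pt) : R := Num.sqrt (dot x x).

Definition inQ (s : R) (x : pt) : Prop :=
  forall i : 'I_3, - (s / 2) <= x 0 i /\ x 0 i < s / 2.

Definition nbhd (A : pt -> Prop) (s : R) (x : pt) : Prop :=
  exists a, A a /\ enorm (x - a) < s.

Definition setdist_ge (A B : pt -> Prop) (d : R) : Prop :=
  forall a b, A a -> B b -> d <= enorm (a - b).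

Definition plane (nu : pt) (c : R) (x : pt) : Prop := dot x nu = c.

Definition faces (k : 'I_3) (rho : R) (x : pt) : Prop :=
  x 0 k = - (rho / 2) \/ x 0 k = rho / 2.

Definition meets_nbhd (eta rho : R) (nu : pt) (c : R) : Prop :=
  exists x, inQ rho x /\ nbhd (plane nu c) (3 * eta * rho) x.

Definition good_cond (theta rho : R) (nu : pt) (c : R) : Prop :=
  (exists i j : 'I_3, i != j /\ theta <= `|nu 0 i| /\ theta <= `|nu 0 j|)
  \/ (exists k : 'I_3, theta <= `|nu 0 k| /\
        setdist_ge (fun x => plane nu c x /\ inQ (3 * rho) x) (faces k rho)
                   (20 * theta * rho)).

Definition theta_good (theta eta rho : R) (nu : pt) (c : R) : Prop :=
  enorm nu = 1 /\ meets_nbhd eta rho nu c /\ good_cond theta rho nu c.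

Definition theta_bad (theta eta rho : R) (nu : pt) (c : R) : Prop :=
  enorm nu = 1 /\ meets_nbhd eta rho nu c /\ ~ good_cond theta rho nu c.
End Defs.

(* If at most one coordinate of a unit normal reaches theta and 3 theta^2 < 1,
   exactly one does, say nu_k, and then |nu_k| >= 1/2.  On L, the coordinate
   x_k is an affine function of the other two coordinates with slopes below
   2 theta, so it varies by at most 12 theta rho over L /\ Q_{3 rho}.  Badness
   puts one point of L /\ Q_{3 rho} within 20 theta rho of a face x_k = +-rho/2;
   for theta = 1/200 the whole slice then stays within rho/4 of that face. *)
From HB Require Import structures.
From mathcomp Require Import all_boot all_order all_algebra.
From mathcomp Require Import reals.
From mathcomp Require Import lra.
From Stdlib Require Import Classical.
Import Order.TTheory GRing.Theory Num.Theory.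
Set Implicit Arguments. Unset Strict Implicit.
Local Open Scope ring_scope.

Section UnitNormal.
Variable R : realType.
Implicit Types (x y a nu : pt R) (theta rho c d : R).

Lemma dot_split (k : 'I_3) : exists i j : 'I_3, [/\ i != k, j != k &
  forall x y, dot x y = x 0 k * y 0 k + x 0 i * y 0 i + x 0 j * y 0 j].
Proof.
exists (lift k ord0), (lift k (lift ord0 ord0)); split; rewrite 1?eq_sym ?neq_lift // => x y.
by rewrite /dot (bigD1_ord k) // !big_ord_recl big_ord0 /= addr0 addrA.
Qed.

Lemma sqr_coord_le_dot x (k : 'I_3) : x 0 k ^+ 2 <= dot x x.
Proof.
have [i [j [_ _ ->]]] := dot_split k.
by rewrite -!expr2; have := sqr_ge0 (x 0 i); have := sqr_ge0 (x 0 j); lra.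
Qed.

Lemma dot_self_ge0 x : 0 <= dot x x.
Proof. exact: le_trans (sqr_ge0 _) (sqr_coord_le_dot x 0). Qed.

Lemma norm_coord_le_enorm x (k : 'I_3) : `|x 0 k| <= enorm x.
Proof. by rewrite /enorm -sqrtr_sqr ler_sqrt ?dot_self_ge0 ?sqr_coord_le_dot. Qed.

Lemma enorm1_dot nu : enorm nu = 1 -> dot nu nu = 1.
Proof. by move=> nu1; rewrite -(sqr_sqrtr (dot_self_ge0 nu)) -/(enorm nu) nu1 expr1n. Qed.

Lemma sqr_lt_of_norm_lt theta (v : R) : `|v| < theta -> v ^+ 2 < theta ^+ 2.
Proof. by move=> lt_v; rewrite -real_normK ?num_real // ltrXn2r // ltW. Qed.

Lemma unit_has_large_coord theta nu :
  dot nu nu = 1 -> 3 * theta ^+ 2 < 1 -> exists k : 'I_3, theta <= `|nu 0 k|.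
Proof.
move=> nu1 small; apply: NNPP => none.
have lt_k (k : 'I_3) : nu 0 k ^+ 2 < theta ^+ 2.
  by apply: sqr_lt_of_norm_lt; rewrite ltNge; apply/negP => ge_k; apply: none; exists k.
have [i [j [_ _ nuE]]] := dot_split 0.
by move: nu1; rewrite nuE -!expr2; have := lt_k 0; have := lt_k i; have := lt_k j; lra.
Qed.

Lemma unit_large_coord_ge_half theta nu (k : 'I_3) :
  dot nu nu = 1 -> theta <= 1 / 2 -> (forall j, j != k -> `|nu 0 j| < theta) ->
  1 / 2 <= `|nu 0 k|.
Proof.
move=> nu1 le_theta small.
have [i [j [ik jk nuE]]] := dot_split k.
have theta_ge0 : 0 <= theta by apply: le_trans (normr_ge0 (nu 0 i)) (ltW (small i ik)).
have := sqr_lt_of_norm_lt (small i ik); have := sqr_lt_of_norm_lt (small j jk).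
move: nu1; rewrite nuE -!expr2 -(real_normK (num_real (nu 0 k))) => nu1.
by have := normr_ge0 (nu 0 k); nra.
Qed.

Lemma inQ_coord_dist rho x y (l : 'I_3) : inQ rho x -> inQ rho y -> `|x 0 l - y 0 l| <= rho.
Proof.
move=> /(_ l) [x_lo x_hi] /(_ l) [y_lo y_hi].
by rewrite ler_norml; apply/andP; split; lra.
Qed.

Lemma plane_coord_oscillation theta d nu c x a (k : 'I_3) :
  dot nu nu = 1 -> theta <= 1 / 2 -> (forall j, j != k -> `|nu 0 j| < theta) ->
  plane nu c x -> plane nu c a -> (forall l, `|x 0 l - a 0 l| <= d) ->
  `|x 0 k - a 0 k| <= 4 * theta * d.
Proof.
move=> nu1 le_theta small px pa near.
have half := unit_large_coord_ge_half nu1 le_theta small.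
have [i [j [ik jk nuE]]] := dot_split k.
have slopeE : nu 0 k * (x 0 k - a 0 k) =
    - (nu 0 i * (x 0 i - a 0 i) + nu 0 j * (x 0 j - a 0 j)).
  by move: px pa; rewrite /plane !nuE => px pa; lra.
have bound : `|nu 0 k| * `|x 0 k - a 0 k| <= 2 * theta * d.
  rewrite -normrM slopeE normrN; apply: le_trans (ler_normD _ _) _; rewrite !normrM.
  have := small i ik; have := small j jk; have := near i; have := near j.
  have := normr_ge0 (x 0 i - a 0 i); have := normr_ge0 (x 0 j - a 0 j).
  have := normr_ge0 (nu 0 i); have := normr_ge0 (nu 0 j); nra.
by have := normr_ge0 (x 0 k - a 0 k); nra.
Qed.

Lemma not_good_small_coords theta rho nu c (k : 'I_3) :
  ~ good_cond theta rho nu c -> theta <= `|nu 0 k| ->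
  forall j, j != k -> `|nu 0 j| < theta.
Proof.
move=> bad ge_k j jk; rewrite ltNge; apply/negP => ge_j.
by apply: bad; left; exists j, k.
Qed.

Lemma not_good_near_face theta rho nu c (k : 'I_3) :
  ~ good_cond theta rho nu c -> theta <= `|nu 0 k| ->
  exists a b, (plane nu c a /\ inQ (3 * rho) a) /\ faces k rho b /\
    enorm (a - b) < 20 * theta * rho.
Proof.
move=> bad ge_k; apply: NNPP => far; apply: bad; right; exists k; split => // a b Aa Bb.
by rewrite leNgt; apply/negP => close; apply: far; exists a, b.
Qed.

End UnitNormal.

Lemma inv_200_lt_inv_sqrt3 (R : realType) : 1 / 200 < 1 / Num.sqrt 3 :> R.
Proof.
have sqrt3_lt2 : Num.sqrt (3 : R) < 2.
  by rewrite -[X in _ < X]ger0_norm // -sqrtr_sqr ltr_sqrt; lra.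
by rewrite ltr_pdivlMr ?sqrtr_gt0; lra.
Qed.

Theorem lemma2p21 (R : realType) :
  exists theta : R, 0 < theta /\ theta < 1 / Num.sqrt 3 /\
    forall (eta rho : R) (nu : pt R) (c : R),
      0 < eta -> 0 < rho -> theta_bad theta eta rho nu c ->
      (exists k : 'I_3, theta <= `|nu 0 k| /\
        (forall j : 'I_3, theta <= `|nu 0 j| -> j = k) /\
        ((forall x : pt R, plane nu c x -> inQ (3 * rho) x ->
            - (3 * rho / 4) < x 0 k /\ x 0 k < - (rho / 4))
         \/
         (forall x : pt R, plane nu c x -> inQ (3 * rho) x ->
            rho / 4 < x 0 k /\ x 0 k < 3 * rho / 4))).
Proof.
exists (1 / 200); split; first lra.
split; first exact: inv_200_lt_inv_sqrt3.
move=> eta rho nu c _ rho_gt0 [/enorm1_dot nu1 [_ bad]].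
have [k ge_k] : exists k : 'I_3, 1 / 200 <= `|nu 0 k|.
  by apply: unit_has_large_coord nu1 _; rewrite expr2; lra.
have small := not_good_small_coords bad ge_k.
exists k; split => //; split.
  by move=> j ge_j; apply/eqP; apply: contraLR ge_j => /small; rewrite -ltNge.
have [a [b [[pa qa] [face_b ab_close]]]] := not_good_near_face bad ge_k.
have ab_k : `|a 0 k - b 0 k| < 20 * (1 / 200) * rho.
  by apply: le_lt_trans ab_close; have := norm_coord_le_enorm (a - b) k; rewrite !mxE.
have xa_k x : plane nu c x -> inQ (3 * rho) x -> `|x 0 k - a 0 k| <= 4 * (1 / 200) * (3 * rho).
  move=> px qx; apply: plane_coord_oscillation nu1 _ small px pa _; first lra.
  by move=> l; apply: inQ_coord_dist.
case: face_b => b_k; [left | right] => x px qx; have := xa_k x px qx;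
  move: ab_k; rewrite b_k !ltr_norml !ler_norml => /andP[? ?] /andP[? ?]; split; lra.
Qed.
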